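(* For every $\psi_u\in(0,2\pi)$, $$\alpha_{\mathrm I}=\frac{\zeta_u\cos^2\!\big(-2\pi t-\frac{\pi}{\mu}+\frac{2\pi}{\mu}\lceil t\mu\rceil\big)}{V^2},$$ where $t=\frac34-\frac{\psi_u}{2\pi}\in(-\tfrac14,\tfrac34)$ and $V=\sin(\pi/\mu)/W$. In particular, if $\psi_u$ is uniform on $(0,2\pi)$ then $t$ is uniform on $(-\tfrac14,\tfrac34)$.
   Context: Setup: Let $W\ge 1$ be an integer and $\mu\ge 2$ an even integer, and set $K=\mu W+1$. Let $\zeta_u>0$ and $\psi_u\in(0,2\pi)$, and for $k=1,\dots,K$ let $h_{u,k}=\zeta_u^{1/2}e^{j(\psi_u+2\pi(k-1)/\mu)}$, where $j=\sqrt{-1}$. Let $\mathcal K_1=\{k\in\{2,\dots,K\}:\operatorname{Re}(h_{u,k})>0\}$ and $\alpha_{\mathrm I}=\big(\sum_{k\in\mathcal K_1}\operatorname{Re}(h_{u,k})\big)^2$. *)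

From Stdlib Require Import Reals ZArith List Arith.
From Coquelicot Require Import Complex.
Open Scope R_scope.

(* h_{u,k} = zeta^{1/2} e^{j(psi + 2 pi (k-1)/mu)}, written in polar form
   (Euler's formula): real part sqrt(zeta) cos(theta), imaginary part
   sqrt(zeta) sin(theta). *)
Definition h_uk (zeta psi : R) (mu k : nat) : C :=
  let theta := psi + 2 * PI * INR (k - 1) / INR mu in
  (sqrt zeta * cos theta, sqrt zeta * sin theta).

(* K_1 = { k in {2,...,K} : Re h_{u,k} > 0 }, with K = mu W + 1.
   seq 2 (mu*W) lists 2, 3, ..., mu*W + 1 = K. *)
Definition K1 (W mu : nat) (zeta psi : R) : list nat :=
  filter (fun k => if Rlt_dec 0 (Re (h_uk zeta psi mu k)) then true else false)
         (seq 2 (mu * W)).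

Definition alphaI (W mu : nat) (zeta psi : R) : R :=
  (fold_right Rplus 0 (map (fun k => Re (h_uk zeta psi mu k)) (K1 W mu zeta psi))) ^ 2.

Definition Rceil (x : R) : Z := (- Int_part (- x))%Z.

From Stdlib Require Import Reals ZArith List Arith Lia Lra.
From Coquelicot Require Import Complex.
Open Scope R_scope.

(* The positive real parts Re h_{u,k}, k = 2, ..., mu W + 1, are the positive
   parts of sqrt(zeta) cos(psi + d i) with d = 2 pi / mu.  As the sequence is
   mu-periodic, the sum is W times the sum over any mu consecutive indices; we
   start the window at the first angle >= 3 pi / 2, which is exactly where the
   ceiling in the formula comes from.  On that window the first mu/2 cosines are
   nonnegative and the last mu/2 nonpositive, and the remaining sum of cosines
   in arithmetic progression over half a turn telescopes to
   - sin(a - d/2) / sin(d/2). *)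

Fixpoint rsum (f : nat -> R) (n : nat) : R :=
  match n with O => 0 | S n => f O + rsum (fun i => f (S i)) n end.

Lemma rsum_ext n : forall f g,
  (forall i, (i < n)%nat -> f i = g i) -> rsum f n = rsum g n.
Proof.
  induction n as [|n IH]; intros f g Hfg; simpl; auto.
  rewrite (Hfg O) by lia. f_equal. apply IH. intros; apply Hfg; lia.
Qed.

Lemma rsum_add n m : forall f,
  rsum f (n + m) = rsum f n + rsum (fun i => f (n + i)%nat) m.
Proof.
  induction n as [|n IH]; intros f; simpl.
  - rewrite Rplus_0_l. reflexivity.
  - rewrite IH. ring.
Qed.

Lemma rsum_last n f : rsum f (S n) = rsum f n + f n.
Proof. rewrite <- Nat.add_1_r, rsum_add. simpl. rewrite Nat.add_0_r. ring. Qed.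

Lemma rsum_0 n : rsum (fun _ => 0) n = 0.
Proof. induction n as [|n IH]; simpl; auto. rewrite IH; ring. Qed.

Lemma rsum_scal_l n : forall r f, rsum (fun i => r * f i) n = r * rsum f n.
Proof.
  induction n as [|n IH]; intros r f; simpl; [ring|].
  rewrite (IH r (fun i => f (S i))). ring.
Qed.

Lemma fold_right_Rplus_map_seq n : forall (f : nat -> R) s,
  fold_right Rplus 0 (map f (seq s n)) = rsum (fun i => f (s + i)%nat) n.
Proof.
  induction n as [|n IH]; intros f s; simpl; auto.
  rewrite IH, Nat.add_0_r. f_equal. apply rsum_ext. intros; f_equal; lia.
Qed.

Lemma fold_right_Rplus_map_filter (f : nat -> R) (p : nat -> bool) l :
  fold_right Rplus 0 (map f (filter p l)) =
  fold_right Rplus 0 (map (fun k => if p k then f k else 0) l).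
Proof. induction l as [|x l IH]; simpl; auto. destruct (p x); simpl; rewrite IH; ring. Qed.

Section PeriodicSum.

Variables (g : Z -> R) (p : nat).
Hypothesis g_periodic : forall z, g (z + Z.of_nat p)%Z = g z.

Definition window (s : Z) : R := rsum (fun i => g (s + Z.of_nat i)%Z) p.

Lemma window_succ s : window (s + 1) = window s.
Proof.
  unfold window. destruct p as [|n]; [reflexivity|].
  rewrite rsum_last. cbn [rsum].
  rewrite (rsum_ext n (fun i => g (s + 1 + Z.of_nat i)%Z)
                      (fun i => g (s + Z.of_nat (S i))%Z)) by (intros; f_equal; lia).
  rewrite Rplus_comm. f_equal.
  rewrite <- (g_periodic (s + Z.of_nat 0)). f_equal. lia.
Qed.

Lemma window_shift_nat n : forall s, window (s + Z.of_nat n) = window s.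
Proof.
  induction n as [|n IH]; intros s.
  - rewrite Z.add_0_r; auto.
  - rewrite Nat2Z.inj_succ, <- Z.add_1_r, Z.add_assoc, window_succ. auto.
Qed.

Lemma window_indep s s' : window s = window s'.
Proof.
  assert (to0 : forall z, window z = window 0).
  { intros z. destruct (Z_le_gt_dec 0 z).
    - replace z with (0 + Z.of_nat (Z.to_nat z))%Z by lia. apply window_shift_nat.
    - rewrite <- (window_shift_nat (Z.to_nat (- z)) z). f_equal. lia. }
  rewrite (to0 s), (to0 s'). reflexivity.
Qed.

Lemma rsum_periodic s W :
  rsum (fun i => g (s + Z.of_nat i)%Z) (W * p) = INR W * window s.
Proof.
  induction W as [|W IH]; [simpl; ring|].
  rewrite Nat.mul_succ_l, Nat.add_comm, rsum_add.
  rewrite (rsum_ext _ (fun i => g (s + Z.of_nat (p + i))%Z) (fun i => g (s + Z.of_nat i)%Z)).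
  - rewrite IH, S_INR. unfold window. ring.
  - intros i _. rewrite <- (g_periodic (s + Z.of_nat i)). f_equal. lia.
Qed.

End PeriodicSum.

Lemma two_cos_mul_sin x y : 2 * cos x * sin y = sin (x + y) - sin (x - y).
Proof. rewrite sin_plus, sin_minus. ring. Qed.

Lemma rsum_cos_arith n : forall a d,
  rsum (fun i => cos (a + d * INR i)) n * (2 * sin (d / 2)) =
  sin (a + d * INR n - d / 2) - sin (a - d / 2).
Proof.
  induction n as [|n IH]; intros a d; cbn [rsum].
  - simpl INR. replace (a + d * 0 - d / 2) with (a - d / 2) by ring. ring.
  - rewrite (rsum_ext n _ (fun i => cos ((a + d) + d * INR i)))
      by (intros; rewrite S_INR; f_equal; ring).
    rewrite Rmult_plus_distr_r, IH, S_INR, Rmult_0_r, Rplus_0_r.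
    replace (cos a * (2 * sin (d / 2))) with (2 * cos a * sin (d / 2)) by ring.
    rewrite two_cos_mul_sin.
    replace (a + d - d / 2) with (a + d / 2) by field.
    replace (a + d + d * INR n - d / 2) with (a + d * (INR n + 1) - d / 2) by ring.
    ring.
Qed.

Lemma rsum_cos_half_turn a d n :
  d * INR n = PI -> sin (d / 2) <> 0 ->
  rsum (fun i => cos (a + d * INR i)) n = - sin (a - d / 2) / sin (d / 2).
Proof.
  intros Hdn Hsin.
  apply (Rmult_eq_reg_r (2 * sin (d / 2))); [|lra].
  rewrite rsum_cos_arith, Hdn.
  replace (a + PI - d / 2) with (a - d / 2 + PI) by ring.
  rewrite neg_sin. field. exact Hsin.
Qed.

Definition pos_part (x : R) : R := if Rlt_dec 0 x then x else 0.

Lemma pos_part_id x : 0 <= x -> pos_part x = x.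
Proof. unfold pos_part; destruct Rlt_dec; lra. Qed.

Lemma pos_part_eq0 x : x <= 0 -> pos_part x = 0.
Proof. unfold pos_part; destruct Rlt_dec; lra. Qed.

Lemma cos_sub_2PI x : cos (x - 2 * PI) = cos x.
Proof. rewrite cos_minus, cos_2PI, sin_2PI. ring. Qed.

Lemma cos_ge_0_3PI2 x : 3 * (PI / 2) <= x <= 5 * (PI / 2) -> 0 <= cos x.
Proof. intros Hx. rewrite <- cos_sub_2PI. apply cos_ge_0; lra. Qed.

Lemma cos_le_0_5PI2 x : 5 * (PI / 2) <= x <= 7 * (PI / 2) -> cos x <= 0.
Proof. intros Hx. rewrite <- cos_sub_2PI. apply cos_le_0; lra. Qed.

(* Only the first half turn, where the cosines are nonnegative, contributes. *)
Lemma rsum_pos_part_cos r a d n :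
  0 <= r -> 0 < d -> d * INR n = PI -> 3 * (PI / 2) <= a < 3 * (PI / 2) + d ->
  rsum (fun i => pos_part (r * cos (a + d * INR i))) (2 * n) =
  r * rsum (fun i => cos (a + d * INR i)) n.
Proof.
  intros Hr Hd Hdn Ha. replace (2 * n)%nat with (n + n)%nat by lia.
  assert (Hstep : forall i, (i < n)%nat -> 0 <= d * INR i <= PI - d).
  { intros i Hi. assert (INR i + 1 <= INR n) by (rewrite <- S_INR; apply le_INR; lia).
    assert (0 <= INR i) by apply pos_INR. nra. }
  rewrite rsum_add, <- rsum_scal_l.
  rewrite (rsum_ext n (fun i => pos_part (r * cos (a + d * INR (n + i)))) (fun _ => 0)).
  - rewrite rsum_0, Rplus_0_r. apply rsum_ext. intros i Hi.
    apply pos_part_id, Rmult_le_pos; [exact Hr|].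
    apply cos_ge_0_3PI2. specialize (Hstep i Hi). lra.
  - intros i Hi. apply pos_part_eq0.
    assert (Hc : cos (a + d * INR (n + i)) <= 0).
    { apply cos_le_0_5PI2. rewrite plus_INR, Rmult_plus_distr_l, Hdn.
      specialize (Hstep i Hi). lra. }
    nra.
Qed.

(* Positive part of Re h_{u,z+1}, extended to all integer indices z. *)
Definition re_pos (zeta psi : R) (mu : nat) (z : Z) : R :=
  pos_part (sqrt zeta * cos (psi + 2 * PI / INR mu * IZR z)).

Lemma re_pos_periodic zeta psi mu z : (0 < mu)%nat ->
  re_pos zeta psi mu (z + Z.of_nat mu) = re_pos zeta psi mu z.
Proof.
  intros Hmu. assert (0 < INR mu) by (apply lt_0_INR; lia).
  unfold re_pos. rewrite <- cos_sub_2PI, plus_IZR, <- INR_IZR_INZ.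
  do 3 f_equal. field. lra.
Qed.

Lemma sum_Re_K1 W mu zeta psi : (0 < mu)%nat ->
  fold_right Rplus 0 (map (fun k => Re (h_uk zeta psi mu k)) (K1 W mu zeta psi)) =
  rsum (fun i => re_pos zeta psi mu (1 + Z.of_nat i)) (W * mu).
Proof.
  intros Hmu. unfold K1.
  rewrite fold_right_Rplus_map_filter, fold_right_Rplus_map_seq, Nat.mul_comm.
  apply rsum_ext. intros i _. unfold h_uk, re_pos, pos_part. cbn [Re fst].
  replace (psi + 2 * PI * INR (2 + i - 1) / INR mu)
    with (psi + 2 * PI / INR mu * IZR (1 + Z.of_nat i)).
  - destruct Rlt_dec; reflexivity.
  - rewrite plus_IZR, <- INR_IZR_INZ. replace (2 + i - 1)%nat with (S i) by lia.
    rewrite S_INR. assert (0 < INR mu) by (apply lt_0_INR; lia). field. lra.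
Qed.

Lemma Rceil_angle_window psi d x :
  0 < d -> d * x = 3 * (PI / 2) - psi ->
  3 * (PI / 2) <= psi + d * IZR (Rceil x) < 3 * (PI / 2) + d.
Proof.
  intros Hd Hx.
  assert (Hc : x <= IZR (Rceil x) < x + 1).
  { unfold Rceil. rewrite opp_IZR. destruct (base_Int_part (- x)). lra. }
  split; nra.
Qed.

Theorem theorem1 (W mu : nat) (zeta psi : R) :
  (1 <= W)%nat -> (2 <= mu)%nat -> Nat.Even mu ->
  0 < zeta -> 0 < psi < 2 * PI ->
  let t := 3 / 4 - psi / (2 * PI) in
  let V := sin (PI / INR mu) / INR W in
  alphaI W mu zeta psi =
  zeta * (cos (- 2 * PI * t - PI / INR mu
               + 2 * PI / INR mu * IZR (Rceil (t * INR mu)))) ^ 2 / V ^ 2.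
Proof.
  intros HW Hmu [n Hn] Hz Hpsi t V.
  assert (Hmu0 : 0 < INR mu) by (apply lt_0_INR; lia).
  assert (HW0 : 0 < INR W) by (apply lt_0_INR; lia).
  assert (Hn1 : 1 <= INR n) by (apply (le_INR 1); lia).
  assert (HPI := PI_RGT_0).
  set (d := 2 * PI / INR mu).
  assert (Hdn : d * INR n = PI) by (unfold d; rewrite Hn, mult_INR; simpl; field; lra).
  assert (Hd : 0 < d) by (unfold d; apply Rdiv_lt_0_compat; lra).
  assert (Hg := fun z => re_pos_periodic zeta psi mu z ltac:(lia)).
  set (c := Rceil (t * INR mu)).
  set (a := psi + d * IZR c).
  assert (Ha : 3 * (PI / 2) <= a < 3 * (PI / 2) + d)
    by (apply Rceil_angle_window; [exact Hd | unfold d, t; field; lra]).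
  assert (Hsin : 0 < sin (d / 2)) by (apply sin_gt_0; nra).
  unfold alphaI. rewrite sum_Re_K1 by lia.
  rewrite (rsum_periodic _ mu Hg 1 W), (window_indep _ mu Hg 1 c).
  unfold window, re_pos. fold d.
  rewrite (rsum_ext mu _ (fun i => pos_part (sqrt zeta * cos (a + d * INR i))))
    by (intros; rewrite plus_IZR, <- INR_IZR_INZ; unfold a; do 3 f_equal; ring).
  rewrite Hn at 1. rewrite rsum_pos_part_cos, rsum_cos_half_turn by (auto using sqrt_pos; lra).
  replace (- 2 * PI * t - PI / INR mu + d * IZR c) with (a - d / 2 - 3 * (PI / 2))
    by (unfold a, d, t; field; lra).
  rewrite cos_minus, cos_3PI2, sin_3PI2.
  unfold V. replace (PI / INR mu) with (d / 2) by (unfold d; field; lra).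
  rewrite <- (pow2_sqrt zeta) at 2 by lra.
  field. lra.
Qed.
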